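(* Let $\mathcal{C}$ be a class of $\Sigma$-algebras and assume that $\mathbf{T}_{\le 0}/{\sim_{\mathcal{C}}}$ is finite. Let $S_0 = \{s_1,\dots,s_m\} \subseteq \mathbf{T}_{\le 0}$ be such that $\mathbf{T}_{\le 0}/{\sim_{\mathcal{C}}} = \{[s_1],\dots,[s_m]\}$. Let $\dot\Sigma_0 \subseteq \dot\Sigma$ be the finite set of characters $f(t_1,\dots,t_{i-1},\_,t_{i+1},\dots,t_n)$ with $f\in\Sigma$ $n$-ary, $i\in\{1,\dots,n\}$ and $t_j\in S_0$ for all $j\ne i$. Then, if $\dot\Sigma_0^*/{\dot\sim_{\mathcal{C}}}$ is finite, $\dot\Sigma^*/{\dot\sim_{\mathcal{C}}}$ is finite.
   Context: $\Sigma$ is a finite algebraic signature and $V$ a non-empty finite set of variables; $\mathbf{T}$ is the set of $\Sigma$-terms over $V$. A $\Sigma$-algebra has a non-empty finite universe and an interpretation of each function symbol; $t \sim_{\mathcal{C}} s$ iff $t$ and $s$ evaluate equally under all valuations in all algebras in $\mathcal{C}$. $\mathrm{vo}(t)$ is the number of variable occurrences in $t$, and $\mathbf{T}_{\le k}=\{t\in\mathbf{T} : \mathrm{vo}(t)\le k\}$. $\dot\Sigma$ is the set of characters $f(t_1,\dots,t_{i-1},\_,t_{i+1},\dots,t_n)$ where $f\in\Sigma$ is $n$-ary, $i\in\{1,\dots,n\}$, and each $t_j$ ($j\ne i$) has $\mathrm{vo}(t_j)=0$. For $w\in\dot\Sigma^*$, $w[t]$ is defined by $\varepsilon[t]=t$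 and $(f(t_1,\dots,\_,\dots,t_n)\,w')[t] = f(t_1,\dots,t_{i-1},w'[t],t_{i+1},\dots,t_n)$. $w\ \dot\sim_{\mathcal{C}}\ w'$ iff $w[a]\sim_{\mathcal{C}} w'[a]$ for any variable $a\in V$ (the relation is considered on $\dot\Sigma^*$ and on its restriction to $\dot\Sigma_0^*$). *)

From mathcomp Require Import all_boot.
From Stdlib Require Import List.
Set Implicit Arguments. Unset Strict Implicit. Unset Printing Implicit Defensive.

Record signature := Signature { sym : finType; arity : sym -> nat }.

Section Terms.
Variables (Sig : signature) (V : Type).

Inductive term : Type :=
| Var : V -> term
| App : forall f : sym Sig, ('I_(arity f) -> term) -> term.

Fixpoint vo (t : term) : nat :=
  match t with
  | Var _ => 1
  | App f a => \sum_(j < arity f) vo (a j)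
  end.

(* Sigma-algebras: non-empty finite universe with interpretations. *)
Record algebra := Algebra {
  carrier : finType;
  carrier_elt : carrier;
  op : forall f : sym Sig, ('I_(arity f) -> carrier) -> carrier }.

Fixpoint eval (A : algebra) (v : V -> carrier A) (t : term) : carrier A :=
  match t with
  | Var x => v x
  | App f a => @op A f (fun j => eval v (a j))
  end.

Definition equivC (C : algebra -> Prop) (t s : term) : Prop :=
  forall A : algebra, C A -> forall v : V -> carrier A, eval v t = eval v s.

(* Raw characters f(t_1,..,_,..,t_n): the entry at the hole position is ignored. *)
Record rchar := RChar {
  rc_f : sym Sig;
  rc_i : 'I_(arity rc_f);
  rc_args : 'I_(arity rc_f) -> term }.

Definition is_char (c : rchar) : Prop :=
  forall j, j != @rc_i c -> vo (@rc_args c j) = 0.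

Definition is_char0 (S0 : list term) (c : rchar) : Prop :=
  forall j, j != @rc_i c -> In (@rc_args c j) S0.

Definition fill (c : rchar) (t : term) : term :=
  App (fun j => if j == @rc_i c then t else @rc_args c j).

Definition wapp (w : list rchar) (t : term) : term := foldr fill t w.

Definition dequivC (C : algebra -> Prop) (w w' : list rchar) : Prop :=
  forall a : V, equivC C (wapp w (Var a)) (wapp w' (Var a)).

End Terms.

Definition finite_quotient (X : Type) (P : X -> Prop) (R : X -> X -> Prop) : Prop :=
  exists l : list X, (forall y, In y l -> P y) /\
    forall x, P x -> exists y, In y l /\ R x y.

From mathcomp Require Import all_boot.
From Stdlib Require Import List FunctionalExtensionality.

Set Implicit Arguments.
Unset Strict Implicit.

(* Every argument of a character f(t_1,..,_,..,t_n) is a ground term, so it can be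
   replaced by its representative in S0 without changing the interpretation of the
   character in any algebra of C. Hence every word over the full alphabet is
   dot-equivalent to a word over the finite alphabet of characters with arguments
   in S0, and a finite set of representatives for the latter also represents the
   former. *)

Lemma finite_quotient_reduce (X : Type) (P Q : X -> Prop) (R : X -> X -> Prop) :
    (forall x y z, R x y -> R y z -> R x z) ->
    (forall y, Q y -> P y) ->
    (forall x, P x -> exists y, Q y /\ R x y) ->
  finite_quotient Q R -> finite_quotient P R.
Proof.
move=> R_trans QP PQ [l [lQ l_cov]]; exists l; split=> [y /lQ/QP // | x /PQ [y [Qy Rxy]]].
have [z [lz Ryz]] := l_cov y Qy.
by exists z; split=> //; apply: R_trans Ryz.
Qed.

Section Characters.
Variables (Sig : signature) (V : Type) (C : algebra Sig -> Prop).
Implicit Types (t : term Sig V) (c : rchar Sig V) (w : list (rchar Sig V)).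

Lemma equivC_trans t1 t2 t3 :
  equivC C t1 t2 -> equivC C t2 t3 -> equivC C t1 t3.
Proof. by move=> E12 E23 A CA v; rewrite (E12 A CA v) (E23 A CA v). Qed.

Lemma dequivC_trans w1 w2 w3 :
  dequivC C w1 w2 -> dequivC C w2 w3 -> dequivC C w1 w3.
Proof. by move=> E12 E23 a; apply: equivC_trans (E12 a) (E23 a). Qed.

Lemma equivC_fill c t t' : equivC C t t' -> equivC C (fill c t) (fill c t').
Proof.
move=> E A CA v /=; congr (op _); apply: functional_extensionality => j.
by case: (j == rc_i c) => //; apply: E.
Qed.

Lemma is_char0_char (S0 : list (term Sig V)) c :
  (forall s, In s S0 -> vo s = 0) -> is_char0 S0 c -> is_char c.
Proof. by move=> S0_ground c0 j /c0 /S0_ground. Qed.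

Variable S0 : list (term Sig V).
Hypothesis S0_cover : forall t, vo t = 0 -> exists s, In s S0 /\ equivC C t s.

Lemma char0_repr c : is_char c ->
  exists c', is_char0 S0 c' /\ forall t, equivC C (fill c t) (fill c' t).
Proof.
case: c => f i args c_char.
have /fin_all_exists [args' args'P] :
    forall j, exists s, j != i -> In s S0 /\ equivC C (args j) s.
  move=> j; have [/c_char/S0_cover [s sP] | _] := boolP (j != i).
    by exists s.
  by exists (args j).
exists (RChar i args'); split=> [j /args'P [] // | t A CA v /=].
congr (op _); apply: functional_extensionality => j.
have [// | /args'P [_ E]] := boolP (j == i).
exact: E.
Qed.

Lemma word0_repr w : Forall (@is_char Sig V) w ->
  exists w', Forall (is_char0 S0) w' /\ forall t, equivC C (wapp w t) (wapp w' t).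
Proof.
elim: w => [|c w IHw] w_char; first by exists nil.
inversion w_char as [|? ? c_char w_char']; subst.
have [w' [w'0 Ew]] := IHw w_char'.
have [c' [c'0 Ec]] := char0_repr c_char.
exists (c' :: w'); split=> [|t]; first by constructor.
exact: equivC_trans (equivC_fill c (Ew t)) (Ec _).
Qed.

End Characters.

Theorem lemma2p12 (Sig : signature) (V : finType) (a0 : V)
    (C : algebra Sig -> Prop)
    (Hfin0 : finite_quotient (fun t : term Sig V => vo t = 0) (equivC C))
    (S0 : list (term Sig V))
    (HS0 : forall s, In s S0 -> vo s = 0)
    (HS0cov : forall t : term Sig V, vo t = 0 -> exists s, In s S0 /\ equivC C t s) :
  finite_quotient (fun w : list (rchar Sig V) => Forall (is_char0 S0) w) (dequivC C) ->
  finite_quotient (fun w : list (rchar Sig V) => Forall (@is_char Sig V) w) (dequivC C).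
Proof.
(* Hfin0 only guarantees that a finite S0 exists; S0 itself is given. *)
apply: finite_quotient_reduce; first exact: dequivC_trans.
  by move=> w; apply: Forall_impl => c; apply: is_char0_char.
move=> w /(word0_repr HS0cov) [w' [w'0 Ew]].
by exists w'; split=> // a; apply: Ew.
Qed.
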